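(* Let $k,n$ be positive integers with $k\leqslant n$ and let $X\subseteq [n]^k_<$. Then $X$ is a matroid if and only if its barycentric subdivision $\mathcal{B}(X)\subseteq \mathrm{Conf}_k([n])$ is a Coxeter matroid.
   Context: $[n]:=\{1,\ldots,n\}$. $[n]^k_<$ denotes the set of $k$-element subsets of $[n]$, each identified with the increasing tuple $(x_1<\cdots<x_k)$ of its elements; $A+B:=(A\setminus B)\cup(B\setminus A)$. $X\subseteq[n]^k_<$ is a matroid if for all $A,B\in X$ and $a\in A\setminus B$ there exists $b\in B\setminus A$ with $A+\{a,b\}\in X$. $\mathrm{Conf}_k([n])$ is the set of $k$-tuples $(a_1,\ldots,a_k)$ of pairwise distinct elements of $[n]$. For $x\in\mathrm{Conf}_k([n])$ and $i\in[k]$, let $P^{(i)}(x)\in[n]^i_<$ be the increasing rearrangement of $\{x_1,\ldots,x_i\}$. The Bruhat order on $[n]^i_<$ is $u\leqslant v$ iff $u_j\leqslant v_j$ for all $j\in[i]$; the Bruhat order on $\mathrm{Conf}_k([n])$ is $x\leqslant y$ iff $P^{(i)}(x)\leqslant P^{(i)}(y)$ in $[n]^i_<$ for all $i\in[k]$ (this is the Bruhat order of the parabolic quotient $S_n^{\{k+1,\ldots,n-1\}}$ under the identification of $\mathrm{Conf}_k([n])$ with that quotient). The symmetric group $S_n$ acts on $\mathrm{Conf}_k([n])$ by $w\cdot(x_1,\ldots,x_k)=(w(x_1),\ldots,w(x_k))$. A subset $Y\subseteq\mathrm{Conf}_k([n])$ is a Coxeter matroid if for every $w\in S_n$ the set $\{w\cdot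 y: y\in Y\}$ has a unique maximal element (a maximum) in the Bruhat order of $\mathrm{Conf}_k([n])$. The barycentric subdivision of $X$ is $\mathcal{B}(X):=\{(x_{\sigma(1)},\ldots,x_{\sigma(k)}): x\in X,\ \sigma\in S_k\}\subseteq\mathrm{Conf}_k([n])$. *)

(* [n] = {1..n} is modelled by 'I_n = {0..n-1} (order-preserving relabeling). *)
From mathcomp Require Import all_boot all_fingroup.
Set Implicit Arguments. Unset Strict Implicit. Unset Printing Implicit Defensive.

Section Defs.
Variables (n k : nat).

Definition incr (x : seq 'I_n) : bool := sorted (fun a b : 'I_n => (a < b)%N) x.

Definition elts (x : seq 'I_n) : {set 'I_n} := [set c in x].

Definition symdiff (A B : {set 'I_n}) : {set 'I_n} := (A :\: B) :|: (B :\: A).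

Definition is_matroid (X : {set k.-tuple 'I_n}) : Prop :=
  forall A B, A \in X -> B \in X ->
  forall a : 'I_n, a \in elts A -> a \notin elts B ->
  exists b : 'I_n, [/\ b \in elts B, b \notin elts A &
     exists2 C, C \in X & elts C = symdiff (elts A) [set a; b]].

Definition conf : {set k.-tuple 'I_n} := [set t : k.-tuple 'I_n | uniq t].

Definition Pfx (x : seq 'I_n) (i : nat) : seq 'I_n :=
  sort (fun a b : 'I_n => (a <= b)%N) (take i x).

Definition bruhat_sub (u v : seq 'I_n) : bool :=
  all2 (fun a b : 'I_n => (a <= b)%N) u v.

Definition bruhat_conf (x y : k.-tuple 'I_n) : Prop :=
  forall i, (1 <= i <= k)%N -> bruhat_sub (Pfx x i) (Pfx y i).

Definition act_set (w : {perm 'I_n}) (Y : {set k.-tuple 'I_n}) : {set k.-tuple 'I_n} :=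
  [set map_tuple w y | y in Y].

Definition coxeter_matroid (Y : {set k.-tuple 'I_n}) : Prop :=
  Y \subset conf /\
  forall w : {perm 'I_n}, exists2 m, m \in act_set w Y &
    forall y, y \in act_set w Y -> bruhat_conf y m.

Definition bary (X : {set k.-tuple 'I_n}) : {set k.-tuple 'I_n} :=
  [set [tuple tnth x (s i) | i < k] | x : k.-tuple 'I_n in X, s : 'S_k in [set: 'S_k]].

End Defs.

From mathcomp Require Import all_boot all_fingroup zify.
Set Implicit Arguments. Unset Strict Implicit. Unset Printing Implicit Defensive.

(* For a weight w on [n], the Bruhat order on w.B(X) compares the prefixes of
   two configurations through the counts #{j <= i | w(y_j) >= t}, i.e. it is the
   Gale order on flags of prefix sets.  If X is a matroid, the greedy algorithm
   yields a basis G meeting every upper set {w >= t} in as many elements as any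
   independent set does; listing G by decreasing weight gives the maximum of
   w.B(X).  Conversely, for bases A, B and a in A \ B, take w with A - a on top,
   then B, then the rest: the maximum C of w.B(X) contains A - a and lies inside
   (A - a) u B, so C = A - a + b with b in B \ A. *)

Section KeyedSequences.
Variables (T : Type) (f : T -> nat).
Implicit Types (s u v : seq T) (t : nat).

Lemma all2_leq_count u v t : all2 (fun a b => f a <= f b) u v ->
  count (fun c => t <= f c) u <= count (fun c => t <= f c) v.
Proof.
elim: u v => [|a u IHu] [|b v] //= /andP[ab /IHu uv].
case: (leqP t (f a)) => [ta | _]; last exact: leq_trans uv (leq_addl _ _).
by rewrite (leq_trans ta ab) leq_add2l.
Qed.

Lemma count_leq_all2 u v :
  sorted (fun a b => f a <= f b) u -> sorted (fun a b => f a <= f b) v ->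
  size u = size v ->
  (forall t, count (fun c => t <= f c) u <= count (fun c => t <= f c) v) ->
  all2 (fun a b => f a <= f b) u v.
Proof.
have le_trans : transitive (fun a b => f a <= f b) by move=> ???; apply: leq_trans.
elim: u v => [|a u IHu] [|b v] //=.
rewrite !(path_sortedE le_trans) => /andP[au su] /andP[bv sv] [sz] le_uv.
have ab : f a <= f b.
  have cu : count (fun c => f a <= f c) u = size u by apply/eqP; rewrite -all_count.
  have := le_uv (f a); rewrite leqnn cu sz add1n.
  by case: (leqP (f a) (f b)) => // _; rewrite add0n ltnNge count_size.
rewrite ab /=; apply: IHu => // t; case: (leqP t (f b)) => [tb | bt].
  have cv : count (fun c => t <= f c) v = size v.
    by apply/eqP; rewrite -all_count; apply: sub_all bv => c; apply: leq_trans.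
  by rewrite cv -sz count_size.
have Nta : (t <= f a) = false by apply/negbTE; rewrite -ltnNge (leq_ltn_trans ab bt).
by have := le_uv t; rewrite Nta [t <= f b]leqNgt bt.
Qed.

Lemma count_take_nonincr s i t : sorted (fun a b => f b <= f a) s ->
  count (fun c => t <= f c) (take i s) = minn i (count (fun c => t <= f c) s).
Proof.
have ge_trans : transitive (fun a b => f b <= f a) by move=> ??? ab bc; apply: leq_trans bc ab.
elim: s i => [|a s IHs] [|i] //=; rewrite ?min0n ?minn0 // (path_sortedE ge_trans).
case/andP=> sa ss; case: (leqP t (f a)) => ta; first by rewrite IHs // add1n minnSS.
have cs : count (fun c => t <= f c) s = 0.
  apply/eqP; rewrite -leqn0 leqNgt -has_count -all_predC.
  by apply: sub_all sa => c ca /=; rewrite -ltnNge (leq_ltn_trans ca ta).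
have := count_cat (fun c => t <= f c) (take i s) (drop i s).
by rewrite cat_take_drop cs minn0 => /esym/eqP; rewrite addn_eq0 => /andP[/eqP].
Qed.

End KeyedSequences.

Section BasisSystem.
Variables (T : finType) (S : {set {set T}}).
Hypothesis exchange_S : forall A B, A \in S -> B \in S -> forall a, a \in A :\: B ->
  exists2 b, b \in B :\: A & b |: (A :\ a) \in S.

Definition indep (I : {set T}) := exists2 B, B \in S & I \subset B.

(* Among the bases containing I, one with fewest elements outside I :|: B lies
   inside it: an element outside could be exchanged for an element of B. *)
Lemma indep_extend I B : indep I -> B \in S ->
  exists2 A, A \in S & I \subset A /\ A \subset I :|: B.
Proof.
case=> A0 A0S IA0 BS.
pose P A := (A \in S) && (I \subset A).
have PA0 : P A0 by rewrite /P A0S.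
have [A /andP[AS IA] Amin] := arg_minnP (fun A => #|A :\: (I :|: B)|) PA0.
exists A => //; split => //; apply: contraT => /subsetPn[x xA]; rewrite inE negb_or.
case/andP=> xI xB.
have xAB : x \in A :\: B by rewrite inE xA xB.
have [b /setDP[bB _] A'S] := exchange_S AS BS xAB.
have /Amin : P (b |: (A :\ x)).
  rewrite /P A'S; apply: subset_trans (subsetUr _ _); apply/subsetP => y yI.
  by rewrite !inE (subsetP IA y yI) andbT; apply: contraNneq xI => <-.
suff lt : #|(b |: A :\ x) :\: (I :|: B)| < #|A :\: (I :|: B)| by rewrite leqNgt lt.
apply: proper_card; apply/properP; split.
  apply/subsetP => y; rewrite !inE => /andP[yIB /orP[/eqP yb | /andP[_ yA]]].
    by rewrite yb bB orbT in yIB.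
  by rewrite yIB yA.
exists x; rewrite !inE (negbTE xI) (negbTE xB) ?xA //= andbT.
by rewrite eqxx orbF; apply: contraNneq xB => ->.
Qed.

Variable k : nat.
Hypothesis card_S : forall A, A \in S -> #|A| = k.

Lemma indep_augment I J : indep I -> indep J -> #|I| < #|J| ->
  exists2 e, e \in J :\: I & indep (e |: I).
Proof.
move=> indI [B BS JB] ltIJ.
have [A AS [IA AIB]] := indep_extend indI BS.
have /subsetPn[e eAI eBJ] : ~~ (A :\: I \subset B :\: J).
  apply: contraL ltIJ => /subset_leq_card; rewrite !cardsD (setIidPr IA) (setIidPr JB).
  rewrite (card_S AS) (card_S BS) -leqNgt => le_k.
  by have := subset_leq_card JB; rewrite (card_S BS); lia.
move: eAI eBJ; rewrite !inE => /andP[eI eA]; rewrite negb_and negbK.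
have eB : e \in B by move: (subsetP AIB e eA); rewrite inE (negbTE eI).
rewrite eB orbF => eJ; exists e; first by rewrite inE eI.
by exists A => //; rewrite subUset sub1set eA.
Qed.

Lemma greedy_basis (w : T -> nat) : S != set0 ->
  exists2 G, G \in S & forall J t, indep J ->
    #|J :&: [set e | t <= w e]| <= #|G :&: [set e | t <= w e]|.
Proof.
case/set0Pn=> G0 G0S.
have [G GS Gmax] := @arg_maxnP _ G0 (mem S) (fun A => \sum_(e in A) w e) G0S.
exists G => // J t indJ; set U := [set e | t <= w e].
rewrite leqNgt; apply/negP => ltGJ.
have indGU : indep (G :&: U) by exists G; rewrite ?subsetIl.
have indJU : indep (J :&: U).
  by case: indJ => B BS JB; exists B; last exact: subset_trans (subsetIl _ _) JB.
have [e /setDP[/setIP[_ eU] eGU] inde] := indep_augment indGU indJU ltGJ.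
have eG : e \notin G by apply: contra eGU => eG; rewrite inE eG eU.
have [A AS [eGUA AeGUG]] := indep_extend inde GS.
have eA : e \in A by apply: (subsetP eGUA); rewrite setU11.
have AG : A :\: G = [set e].
  apply/setP => x; rewrite !inE; apply/andP/eqP => [[xG xA] | ->]; last by rewrite eA eG.
  by move: (subsetP AeGUG x xA); rewrite !inE (negbTE xG) /= !orbF => /eqP.
have [f GA] : exists f, G :\: A = [set f].
  apply/cards1P; rewrite cardsD (card_S GS) setIC.
  by have := cardsID G A; rewrite AG cards1 (card_S AS); lia.
have fU : f \notin U.
  have : f \in G :\: A by rewrite GA set11.
  rewrite inE => /andP[fA fG]; apply: contra fA => fU.
  by apply: (subsetP eGUA); rewrite setU1r // in_setI fG fU.
have /= := Gmax A AS; rewrite leqNgt => /negP; apply.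
rewrite (big_setID A) [X in _ < X](big_setID G) GA AG !big_set1 setIC ltn_add2l.
by move: fU eU; rewrite !inE -ltnNge; apply: leq_trans.
Qed.

End BasisSystem.

Lemma card_leI_subset (T : finType) (A B : {set T}) : #|B| <= #|A :&: B| -> B \subset A.
Proof.
by move=> le_B; apply/setIidPr/eqP; rewrite eqEcard subsetIr le_B.
Qed.

Lemma threshold_set (T : finType) (w : T -> nat) (P : {set T}) :
  (forall e e', e \in P -> e' \notin P -> w e' < w e) -> exists t, [set e | t <= w e] = P.
Proof.
move=> sepP; exists (\max_(e | e \notin P) (w e).+1); apply/setP => e; rewrite inE.
have [eP | eNP] := boolP (e \in P); first by apply/bigmax_leqP => e' /(sepP e e' eP).
by apply/negbTE; rewrite -ltnNge (@leq_bigmax_cond _ _ (fun e => (w e).+1) e eNP).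
Qed.

Section Configurations.
Variables n k : nat.

Lemma perm_key_mono (f : 'I_n -> nat) :
  exists w : {perm 'I_n}, forall e e', f e < f e' -> w e < w e'.
Proof.
pose L := sort (fun a b => f a <= f b) (enum 'I_n).
have memL e : e \in L by rewrite mem_sort mem_enum.
have sizeL : size L = n by rewrite size_sort size_enum_ord.
pose g e : 'I_n := insubd e (index e L).
have gE e : val (g e) = index e L.
  have idx_lt : index e L < n by rewrite -[X in _ < X]sizeL index_mem memL.
  by rewrite val_insubd idx_lt.
have g_inj : injective g.
  by move=> e1 e2 /(congr1 val); rewrite !gE; apply: index_inj (memL e1) (memL e2).
exists (perm g_inj) => e e' lt_ee'; rewrite !permE !gE ltnNge; apply/negP => le_idx.
have sortedL : sorted (fun a b => f a <= f b) L by apply: sort_sorted => a b; apply: leq_total.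
have := sorted_leq_index (fun a b c => @leq_trans (f a) (f b) (f c)) (fun a => leqnn (f a))
  sortedL e' e (memL e') (memL e) le_idx.
by rewrite leqNgt lt_ee'.
Qed.

Lemma perm_flag (P Q : {set 'I_n}) : P \subset Q ->
  exists w : {perm 'I_n}, exists t1 t2,
    [set e | t1 <= w e] = P /\ [set e | t2 <= w e] = Q.
Proof.
move=> PQ; have [w w_mono] := perm_key_mono (fun e => (e \in P) + (e \in Q)).
have [t1 UP] : exists t, [set e | t <= w e] = P.
  apply: threshold_set => e e' eP e'P; apply: w_mono; rewrite eP (subsetP PQ e eP).
  by rewrite (negbTE e'P); case: (e' \in Q).
have [t2 UQ] : exists t, [set e | t <= w e] = Q.
  apply: threshold_set => e e' eQ e'Q; apply: w_mono; rewrite eQ (negbTE e'Q).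
  by rewrite (contraNF (subsetP PQ e') e'Q) addn1; case: (e \in P).
by exists w, t1, t2.
Qed.

Lemma incr_uniq (x : seq 'I_n) : incr x -> uniq x.
Proof. by apply: sorted_uniq => [???|a]; [apply: ltn_trans | rewrite /= ltnn]. Qed.

Lemma card_elts (x : seq 'I_n) : uniq x -> #|elts x| = size x.
Proof. by move=> ux; rewrite cardsE; apply/card_uniqP. Qed.

Lemma count_elts (P : pred 'I_n) (x : seq 'I_n) : uniq x ->
  count P x = #|elts x :&: [set e | P e]|.
Proof.
move=> ux; rewrite -size_filter -(card_uniqP (filter_uniq P ux)).
by apply: eq_card => e; rewrite mem_filter !inE andbC.
Qed.

Lemma symdiff_swap (A : {set 'I_n}) a b : a \in A -> b \notin A ->
  symdiff A [set a; b] = b |: (A :\ a).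
Proof.
move=> aA bA; apply/setP => c; rewrite !inE.
have [-> | ca] := eqVneq c a; first by rewrite aA; case: eqVneq bA => // <-; rewrite aA.
have [-> | cb] := eqVneq c b; first by rewrite (negbTE bA).
by rewrite /= andbF orbF.
Qed.

Definition bases (X : {set k.-tuple 'I_n}) := [set elts x | x : k.-tuple 'I_n in X].

Lemma is_matroidE (X : {set k.-tuple 'I_n}) : is_matroid X <->
  forall A B, A \in bases X -> B \in bases X -> forall a, a \in A :\: B ->
    exists2 b, b \in B :\: A & b |: (A :\ a) \in bases X.
Proof.
split=> [matX _ _ /imsetP[x xX ->] /imsetP[y yX ->] a /setDP[ax ay] | exchX x y xX yX a ax ay].
  have [b [b_y b_x [z zX zE]]] := matX x y xX yX a ax ay.
  by exists b; [rewrite inE b_x | apply/imsetP; exists z; rewrite // zE symdiff_swap].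
have [|b /setDP[b_y b_x] /imsetP[z zX zE]] := exchX _ _ (imset_f _ xX) (imset_f _ yX) a.
  by rewrite inE ax ay.
by exists b; split=> //; exists z; rewrite // -zE symdiff_swap.
Qed.

Lemma bary_memP (X : {set k.-tuple 'I_n}) (y : k.-tuple 'I_n) :
  reflect (exists2 x, x \in X & perm_eq y x) (y \in bary X).
Proof.
apply: (iffP imset2P) => [[x s xX _ ->] | [x xX /tuple_permP[s /val_inj ->]]].
  by exists x => //; apply/tuple_permP; exists s.
by exists x s; rewrite ?inE.
Qed.

Lemma bary_sub_conf (X : {set k.-tuple 'I_n}) : (forall x, x \in X -> incr x) ->
  bary X \subset conf n k.
Proof.
move=> incrX; apply/subsetP => y /bary_memP[x xX yx].
by rewrite inE (perm_uniq yx) incr_uniq ?incrX.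
Qed.

Definition gale_le (w : 'I_n -> nat) (y z : seq 'I_n) :=
  forall i t, count (fun e => t <= w e) (take i y) <= count (fun e => t <= w e) (take i z).

Lemma bruhat_confE (x y : k.-tuple 'I_n) : bruhat_conf x y <-> gale_le val x y.
Proof.
have take_min_k (z : k.-tuple 'I_n) i : take i z = take (minn i k) z.
  by rewrite take_min -{2}(size_tuple z) take_size.
split=> [le_xy i t | le_xy i _].
  rewrite !(take_min_k _ i); have [-> | i_gt0] := posnP (minn i k); first by rewrite !take0.
  have := le_xy (minn i k); rewrite i_gt0 geq_minr => /(_ isT).
  by move/(all2_leq_count (f := val) t); rewrite !count_sort.
apply: (count_leq_all2 (f := val)); rewrite ?sort_sorted //; try exact: leq_total.
  by rewrite !size_sort !size_take !size_tuple.
by move=> t; rewrite !count_sort; apply: le_xy.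
Qed.

Lemma coxeter_matroidE (Y : {set k.-tuple 'I_n}) : coxeter_matroid Y <->
  Y \subset conf n k /\ forall w : {perm 'I_n},
    exists2 z, z \in Y & forall y, y \in Y -> gale_le (fun e => w e) y z.
Proof.
have galeE (w : {perm 'I_n}) (y z : k.-tuple 'I_n) :
    bruhat_conf (map_tuple w y) (map_tuple w z) <-> gale_le (fun e => w e) y z.
  apply: iff_trans (bruhat_confE _ _) _.
  by split=> le_yz i t; have := le_yz i t; rewrite /= -!map_take !count_map.
rewrite /coxeter_matroid /act_set.
split=> [[YC maxY] | [YC maxY]]; split=> // w.
  have [_ /imsetP[z zY ->] zmax] := maxY w.
  by exists z => // y yY; apply/galeE/zmax/imset_f.
have [z zY zmax] := maxY w.
by exists (map_tuple w z) => [|_ /imsetP[y yY ->]]; [apply: imset_f | apply/galeE/zmax].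
Qed.

Variable X : {set k.-tuple 'I_n}.
Hypothesis incrX : forall x, x \in X -> incr x.

Let uniqX x : x \in X -> uniq x. Proof. by move/incrX/incr_uniq. Qed.

Lemma card_bases A : A \in bases X -> #|A| = k.
Proof. by case/imsetP=> x /uniqX ux ->; rewrite card_elts ?size_tuple. Qed.

Lemma matroid_gale_max : X != set0 -> is_matroid X -> forall w : 'I_n -> nat,
  exists2 z, z \in bary X & forall y, y \in bary X -> gale_le w y z.
Proof.
move=> X0 /is_matroidE exchX w.
have bases0 : bases X != set0.
  by case/set0Pn: X0 => x xX; apply/set0Pn; exists (elts x); apply: imset_f.
have [_ /imsetP[x0 x0X ->] x0max] := greedy_basis exchX card_bases w bases0.
pose r a b := w b <= w a.
have size_z : size (sort r x0) == k by rewrite size_sort size_tuple.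
exists (Tuple size_z) => [|y /bary_memP[x xX yx] i t /=].
  by apply/bary_memP; exists x0; rewrite /= ?perm_sort.
rewrite [X in _ <= X]count_take_nonincr ?sort_sorted //; last by move=> a b; apply: leq_total.
rewrite leq_min (leq_trans (count_size _ _)) ?size_take_min ?geq_minl //=.
have uy : uniq y by rewrite (perm_uniq yx) uniqX.
rewrite count_sort (count_elts _ (take_uniq _ uy)) (count_elts _ (uniqX x0X)).
apply: x0max.
exists (elts x); first exact: imset_f.
by apply/subsetP => e; rewrite !inE => /mem_take; rewrite (perm_mem yx).
Qed.

Lemma gale_max_matroid :
  (forall w : {perm 'I_n}, exists2 z, z \in bary X &
     forall y, y \in bary X -> gale_le (fun e => w e) y z) ->
  is_matroid X.
Proof.
move=> maxX; apply/is_matroidE => _ _ /imsetP[A AX ->] /imsetP[B BX ->] a /setDP[aA aB].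
set A' := elts A :\ a.
have [w [t1 [t2 [upA' upA'B]]]] := perm_flag (subsetUl A' (elts B)).
have [z /bary_memP[C CX zC] zmax] := maxX w.
have le_C y t : y \in X ->
    #|elts y :&: [set e | t <= w e]| <= #|elts C :&: [set e | t <= w e]|.
  move=> yX; have yY : y \in bary X by apply/bary_memP; exists y.
  have := zmax y yY k t; rewrite !take_oversize ?size_tuple // (seq.permP zC).
  by rewrite !count_elts ?uniqX.
have A'C : A' \subset elts C.
  apply: card_leI_subset; have := le_C A t1 AX.
  by rewrite upA' (setIidPr (subsetDl _ _)); apply.
have CA'B : elts C \subset A' :|: elts B.
  apply: card_leI_subset; have := le_C B t2 BX; rewrite upA'B (setIidPl (subsetUr _ _)).
  by rewrite setIC (card_bases (imset_f _ BX)) (card_bases (imset_f _ CX)).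
have [b CA'] : exists b, elts C :\: A' = [set b].
  apply/cards1P; rewrite cardsD (setIidPr A'C) (card_bases (imset_f _ CX)).
  by rewrite -(card_bases (imset_f _ AX)) (cardsD1 a (elts A)) aA add1n subSnn.
have /setDP[bC bA'] : b \in elts C :\: A' by rewrite CA' set11.
have bB : b \in elts B by move: (subsetP CA'B b bC); rewrite inE (negbTE bA').
have ba : b != a by apply: contraNneq aB => <-.
have bA : b \notin elts A by rewrite in_setD1 ba in bA'.
exists b; first by rewrite inE bA bB.
apply/imsetP; exists C => //.
by rewrite -(setID (elts C) A') (setIidPr A'C) CA' setUC.
Qed.

End Configurations.

Theorem theorem4p1 (k n : nat) (X : {set k.-tuple 'I_n}) :
  (0 < k)%N -> (k <= n)%N ->
  (forall x, x \in X -> incr x) ->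
  X != set0 ->
  (is_matroid X <-> coxeter_matroid (bary X)).
Proof.
move=> _ _ incrX X0; split=> [matX | /coxeter_matroidE[_ maxX]].
  apply/coxeter_matroidE; split; first exact: bary_sub_conf.
  by move=> w; apply: matroid_gale_max.
exact: gale_max_matroid.
Qed.
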